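(* There exists $\theta_2\in(0,\pi/2)$, depending only on $\alpha$, such that $\mathcal Q(z,\pi(p),\theta)\subset B(p,r_p)$ for all $0<\theta\le\theta_2$, all $p\in\mathbb H\setminus\{0\}$ and all $z\in\mathbb R$ with $|z-z_p|\le|z_p|$.
   Context: $\mathbb H=\mathbb R^3$, $p=(x_p,y_p,z_p)$, group law $(x,y,z)\cdot(x',y',z')=(x+x',y+y',z+z'+\tfrac12(xy'-yx'))$, dilations $\delta_\lambda(x,y,z)=(\lambda x,\lambda y,\lambda^2z)$. Fix $\alpha>0$ such that $d_\alpha(p,q)=\inf\{r>0:\delta_{1/r}(p^{-1}\cdot q)\in B_\alpha\}$ is a distance, $B_\alpha$ the closed Euclidean ball of radius $\alpha$ at $0$. $B(p,r)=\{q:d_\alpha(q,p)\le r\}$, $r_p=d_\alpha(0,p)$. For $p\in\mathbb H$, $z\in\mathbb R$ and $\theta\in(0,\pi/2)$, $\mathcal Q(z,\pi(p),\theta)$ is the Euclidean convex hull in $\mathbb R^3$ of the four points $(0,0,z)$, $(x_p-y_p\tan\theta,\ y_p+x_p\tan\theta,\ z)$, $(x_p+y_p\tan\theta,\ y_p-x_p\tan\theta,\ z)$ and $(2x_p,2y_p,z)$. *)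

From Stdlib Require Import Reals Lra ClassicalEpsilon.
Open Scope R_scope.

Definition Heis : Type := (R * R * R)%type.
Definition hx (p : Heis) : R := fst (fst p).
Definition hy (p : Heis) : R := snd (fst p).
Definition hz (p : Heis) : R := snd p.
Definition mkH (x y z : R) : Heis := (x, y, z).

Definition hmul (p q : Heis) : Heis :=
  mkH (hx p + hx q) (hy p + hy q)
      (hz p + hz q + / 2 * (hx p * hy q - hy p * hx q)).
Definition hinv (p : Heis) : Heis := mkH (- hx p) (- hy p) (- hz p).
Definition dil (l : R) (p : Heis) : Heis :=
  mkH (l * hx p) (l * hy p) (l * l * hz p).

Definition in_Balpha (alpha : R) (p : Heis) : Prop :=
  hx p ^ 2 + hy p ^ 2 + hz p ^ 2 <= alpha ^ 2.

Definition is_inf (S : R -> Prop) (m : R) : Prop :=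
  (forall x, S x -> m <= x) /\ (forall m', (forall x, S x -> m' <= x) -> m' <= m).

Definition Rinf (S : R -> Prop) : R :=
  epsilon (inhabits 0) (fun m => is_inf S m).

Definition d_alpha (alpha : R) (p q : Heis) : R :=
  Rinf (fun r => 0 < r /\ in_Balpha alpha (dil (/ r) (hmul (hinv p) q))).

Definition is_distance (d : Heis -> Heis -> R) : Prop :=
  (forall p q, 0 <= d p q) /\
  (forall p q, d p q = 0 <-> p = q) /\
  (forall p q, d p q = d q p) /\
  (forall p q w, d p w <= d p q + d q w).

Definition in_ball (alpha : R) (p : Heis) (r : R) (q : Heis) : Prop :=
  d_alpha alpha q p <= r.

Definition hzero : Heis := mkH 0 0 0.

Definition r_of (alpha : R) (p : Heis) : R := d_alpha alpha hzero p.

Definition in_hull4 (a b c e q : Heis) : Prop :=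
  exists l1 l2 l3 l4 : R,
    0 <= l1 /\ 0 <= l2 /\ 0 <= l3 /\ 0 <= l4 /\ l1 + l2 + l3 + l4 = 1 /\
    hx q = l1 * hx a + l2 * hx b + l3 * hx c + l4 * hx e /\
    hy q = l1 * hy a + l2 * hy b + l3 * hy c + l4 * hy e /\
    hz q = l1 * hz a + l2 * hz b + l3 * hz c + l4 * hz e.

Definition in_Q (z : R) (p : Heis) (theta : R) (q : Heis) : Prop :=
  in_hull4 (mkH 0 0 z)
           (mkH (hx p - hy p * tan theta) (hy p + hx p * tan theta) z)
           (mkH (hx p + hy p * tan theta) (hy p - hx p * tan theta) z)
           (mkH (2 * hx p) (2 * hy p) z) q.

From Stdlib Require Import Reals Lra Psatz ClassicalEpsilon.
Open Scope R_scope.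

(* Write a point [q] of [Q(z, pi(p), theta)] as [q = (s x - t y, s y + t x, z)] with
   [p = (x, y, Z)], [s] the radial and [t] the angular coordinate.  Then [q^-1 p] has
   horizontal norm [((1-s)^2 + t^2)(x^2 + y^2)] and height [Z - z + t(x^2 + y^2)/2].
   On [Q] the shear [|t|] is at most [tan theta] times the distance [m] of [s] from the
   ends of [[0, 2]], while [(1-s)^2 <= 1 - m]; so for [theta] small the horizontal gain
   [1 - (1-s)^2 - t^2] pays for the growth of the height coordinate.  Hence every
   dilation [delta_k] sending [p] into [B_alpha] also sends [q^-1 p] into it, and
   [d(q, p) <= d(0, p)] follows by comparing the two infima. *)

Lemma is_inf_exists (S : R -> Prop) (lb : R) :
  (exists x, S x) -> (forall x, S x -> lb <= x) -> exists m, is_inf S m.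
Proof.
  intros [x0 Hx0] Hlb.
  destruct (completeness (fun x => S (- x))) as [m [Hub Hleast]].
  - exists (- lb). intros y Hy. apply Hlb in Hy. lra.
  - exists (- x0). now rewrite Ropp_involutive.
  - exists (- m). split.
    + intros x Hx.
      assert (- x <= m) by (apply Hub; now rewrite Ropp_involutive). lra.
    + intros m' Hm'.
      assert (m <= - m') by (apply Hleast; intros y Hy; apply Hm' in Hy; lra). lra.
Qed.

Lemma Rinf_is_inf (S : R -> Prop) : (exists m, is_inf S m) -> is_inf S (Rinf S).
Proof. intros H. exact (epsilon_spec (inhabits 0) _ H). Qed.

Lemma Rinf_le_subset (S T : R -> Prop) (lb : R) :
  (forall x, S x -> T x) -> (exists x, S x) -> (forall x, T x -> lb <= x) ->
  Rinf T <= Rinf S.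
Proof.
  intros HST [x Hx] HT.
  destruct (Rinf_is_inf T) as [T_lb _].
  { apply (is_inf_exists T lb); eauto. }
  destruct (Rinf_is_inf S) as [_ S_glb].
  { apply (is_inf_exists S lb); eauto. }
  apply S_glb. intros y Hy. apply T_lb, HST, Hy.
Qed.

Lemma hmul_hinv_hzero (p : Heis) : hmul (hinv hzero) p = p.
Proof.
  destruct p as [[x y] z].
  unfold hmul, hinv, hzero, hx, hy, hz, mkH; cbn [fst snd].
  f_equal; [f_equal|]; ring.
Qed.

Lemma in_Balpha_dil (alpha k : R) (w : Heis) :
  in_Balpha alpha (dil k w) <->
  k ^ 2 * (hx w ^ 2 + hy w ^ 2) + (k ^ 2 * hz w) ^ 2 <= alpha ^ 2.
Proof.
  unfold in_Balpha, dil, hx, hy, hz, mkH; cbn [fst snd].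
  match goal with |- ?a <= _ <-> ?b <= _ => replace a with b by ring end.
  reflexivity.
Qed.

Lemma dil_in_Balpha_exists (alpha : R) (w : Heis) :
  0 < alpha -> exists r, 0 < r /\ in_Balpha alpha (dil (/ r) w).
Proof.
  intros Halpha.
  set (K := hx w ^ 2 + hy w ^ 2 + hz w ^ 2).
  assert (HK : 0 <= K) by (unfold K; nra).
  set (r := 1 + (1 + K) / alpha).
  assert (Hr_alpha : alpha * r = alpha + 1 + K) by (unfold r; field; lra).
  assert (Hr1 : 1 <= r).
  { assert (0 <= (1 + K) / alpha) by (unfold Rdiv; apply Rmult_le_pos; [lra | left; apply Rinv_0_lt_compat; lra]). unfold r; lra. }
  exists r. split; [lra|].
  apply in_Balpha_dil.
  set (k := / r).
  assert (Hkr : k * r = 1) by (unfold k; field; lra).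
  assert (Hk : 0 < k <= 1) by (split; [apply Rinv_0_lt_compat|]; nra).
  assert (HkK : k ^ 2 * K <= alpha ^ 2).
  { assert (K <= (alpha * r) ^ 2) by (rewrite Hr_alpha; nra).
    replace (alpha ^ 2) with (k ^ 2 * (alpha * r) ^ 2)
      by (replace (k ^ 2 * (alpha * r) ^ 2) with (alpha ^ 2 * (k * r) ^ 2) by ring;
          rewrite Hkr; ring).
    apply Rmult_le_compat_l; nra. }
  assert ((k ^ 2 * hz w) ^ 2 <= k ^ 2 * hz w ^ 2).
  { replace ((k ^ 2 * hz w) ^ 2) with (k ^ 2 * (k ^ 2 * hz w ^ 2)) by ring.
    assert (k ^ 2 <= 1) by nra. nra. }
  unfold K in HkK. nra.
Qed.

Lemma in_ball_of_dil_closed (alpha : R) (p q : Heis) :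
  0 < alpha ->
  (forall k, 0 < k -> in_Balpha alpha (dil k p) ->
             in_Balpha alpha (dil k (hmul (hinv q) p))) ->
  in_ball alpha p (r_of alpha p) q.
Proof.
  intros Halpha Hclosed.
  unfold in_ball, r_of, d_alpha. rewrite hmul_hinv_hzero.
  apply (Rinf_le_subset _ _ 0).
  - intros r [Hr HB]. split; [exact Hr|].
    apply Hclosed; [apply Rinv_0_lt_compat|]; assumption.
  - now apply dil_in_Balpha_exists.
  - intros r [Hr _]. lra.
Qed.

Lemma in_Q_coords (z theta : R) (p q : Heis) :
  in_Q z p theta q ->
  exists s t m, 0 <= m <= 1 /\ m <= s <= 2 - m /\ Rabs t <= Rabs (tan theta) * m /\
    hx q = s * hx p - t * hy p /\ hy q = s * hy p + t * hx p /\ hz q = z.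
Proof.
  intros (l1 & l2 & l3 & l4 & H1 & H2 & H3 & H4 & Hsum & Hqx & Hqy & Hqz).
  unfold hx, hy, hz, mkH in *; cbn [fst snd] in *.
  replace l1 with (1 - l2 - l3 - l4) in Hqx, Hqy, Hqz by lra.
  exists (l2 + l3 + 2 * l4), (tan theta * (l2 - l3)), (l2 + l3).
  rewrite Hqx, Hqy, Hqz.
  repeat split; try lra; try ring.
  rewrite Rabs_mult. apply Rmult_le_compat_l; [apply Rabs_pos|].
  apply Rabs_le; lra.
Qed.

Definition small_slope (alpha tau : R) : Prop :=
  0 <= tau /\ alpha * tau + tau ^ 2 * alpha ^ 2 / 4 + tau ^ 2 <= 1.

Lemma small_slope_le (alpha tau : R) :
  0 < alpha -> 0 <= tau <= / (2 + 2 * alpha) -> small_slope alpha tau.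
Proof.
  intros Halpha Htau. split; [lra|].
  assert (Hbound : tau * (2 + 2 * alpha) <= 1).
  { replace 1 with (/ (2 + 2 * alpha) * (2 + 2 * alpha)) by (field; lra).
    apply Rmult_le_compat_r; lra. }
  assert (alpha * tau <= 1 / 2) by nra.
  assert (tau <= 1 / 2) by nra.
  assert (tau ^ 2 <= 1 / 4) by nra.
  assert (0 <= alpha * tau) by (apply Rmult_le_pos; lra).
  assert ((alpha * tau) ^ 2 <= 1 / 4) by nra.
  nra.
Qed.

Lemma one_sub_sq_le (s m : R) : 0 <= m <= 1 -> m <= s <= 2 - m -> (1 - s) ^ 2 <= 1 - m.
Proof. intros Hm Hs. nra. Qed.

Lemma shear_terms_le (alpha tau A W t m : R) :
  small_slope alpha tau -> 0 <= m <= 1 -> Rabs t <= tau * m ->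
  0 <= W <= alpha -> 0 <= A <= alpha ^ 2 ->
  t ^ 2 + W * Rabs t + t ^ 2 * A / 4 <= m.
Proof.
  intros [Htau Hslope] Hm Ht HW HA.
  rewrite <- (pow2_abs t). set (v := Rabs t).
  assert (Hv : 0 <= v <= tau * m) by (split; [apply Rabs_pos | exact Ht]).
  assert (Hv2 : v ^ 2 <= tau ^ 2 * m).
  { apply Rle_trans with ((tau * m) ^ 2); [apply pow_incr; lra|].
    replace ((tau * m) ^ 2) with (tau ^ 2 * (m * m)) by ring.
    apply Rmult_le_compat_l; nra. }
  assert (W * v <= alpha * (tau * m)) by (apply Rmult_le_compat; lra).
  assert (v ^ 2 * A <= (tau ^ 2 * m) * alpha ^ 2)
    by (apply Rmult_le_compat; [nra | lra | exact Hv2 | lra]).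
  nra.
Qed.

(* Scaled form of the key estimate: [A] and [w] are the horizontal and vertical parts
   of the gauge of [delta_k p], [v] the height of [delta_k (q^-1 p)] before the shear. *)
Lemma shear_gauge_le (alpha tau A w v s t m : R) :
  0 < alpha -> small_slope alpha tau ->
  0 <= m <= 1 -> m <= s <= 2 - m -> Rabs t <= tau * m ->
  0 <= A -> A + w ^ 2 <= alpha ^ 2 -> Rabs v <= Rabs w ->
  ((1 - s) ^ 2 + t ^ 2) * A + (v + t * A / 2) ^ 2 <= alpha ^ 2.
Proof.
  intros Halpha Hslope Hm Hs Ht HA Hgauge Hv.
  assert (Hw : 0 <= Rabs w <= alpha).
  { split; [apply Rabs_pos|]. rewrite <- (pow2_abs w) in Hgauge. nra. }
  assert (Hshear := shear_terms_le alpha tau A (Rabs w) t m Hslope Hm Ht Hw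
                      ltac:(split; [exact HA | nra])).
  assert (Hcross : v * t * A <= Rabs w * Rabs t * A).
  { apply Rmult_le_compat_r; [exact HA|].
    apply Rle_trans with (Rabs (v * t)); [apply Rle_abs|].
    rewrite Rabs_mult. apply Rmult_le_compat_r; [apply Rabs_pos | exact Hv]. }
  assert (Hvw : v ^ 2 <= w ^ 2).
  { rewrite <- (pow2_abs v), <- (pow2_abs w). apply pow_incr. split; [apply Rabs_pos | exact Hv]. }
  assert (Hs2 := one_sub_sq_le s m Hm Hs).
  nra.
Qed.

Lemma dil_hmul_hinv_in_Balpha (alpha theta z k : R) (p q : Heis) :
  0 < alpha -> small_slope alpha (tan theta) ->
  Rabs (z - hz p) <= Rabs (hz p) -> in_Q z p theta q ->
  in_Balpha alpha (dil k p) -> in_Balpha alpha (dil k (hmul (hinv q) p)).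
Proof.
  intros Halpha Hslope Hz HQ HB.
  destruct (in_Q_coords z theta p q HQ) as (s & t & m & Hm & Hs & Ht & Hqx & Hqy & Hqz).
  rewrite (Rabs_pos_eq (tan theta)) in Ht by exact (proj1 Hslope).
  rewrite in_Balpha_dil in HB |- *.
  set (a := hx p ^ 2 + hy p ^ 2) in HB.
  assert (Hv : Rabs (k ^ 2 * (hz p - z)) <= Rabs (k ^ 2 * hz p)).
  { rewrite !Rabs_mult. apply Rmult_le_compat_l; [apply Rabs_pos|].
    now rewrite Rabs_minus_sym. }
  pose proof (shear_gauge_le alpha (tan theta) (k ^ 2 * a) (k ^ 2 * hz p)
    (k ^ 2 * (hz p - z)) s t m Halpha Hslope Hm Hs Ht
    ltac:(apply Rmult_le_pos; unfold a; nra) HB Hv) as Hkey.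
  eapply Rle_trans; [|exact Hkey]. right.
  unfold hmul, hinv, a, hx, hy, hz, mkH in *; cbn [fst snd] in *.
  rewrite Hqx, Hqy, Hqz. field.
Qed.

Lemma tan_le_of_le_atan (theta c : R) : 0 < theta <= atan c -> tan theta <= c.
Proof.
  intros Htheta. pose proof (atan_bound c).
  rewrite <- (atan_right_inv c).
  destruct (Req_dec theta (atan c)) as [-> | Hne]; [lra|].
  left. apply tan_increasing; lra.
Qed.

Theorem lemma5p1 (alpha : R) (Halpha : 0 < alpha)
  (Hdist : is_distance (d_alpha alpha)) :
  exists theta2 : R, 0 < theta2 < PI / 2 /\
    forall (theta : R) (p : Heis) (z : R),
      0 < theta <= theta2 -> p <> hzero -> Rabs (z - hz p) <= Rabs (hz p) ->
      forall q : Heis, in_Q z p theta q -> in_ball alpha p (r_of alpha p) q.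
Proof.
  set (tau0 := / (2 + 2 * alpha)).
  assert (Htau0 : 0 < tau0) by (apply Rinv_0_lt_compat; lra).
  exists (atan tau0). split.
  { split; [rewrite <- atan_0; apply atan_increasing; lra | apply atan_bound]. }
  intros theta p z Htheta _ Hz q HQ.
  assert (Htan : 0 <= tan theta <= tau0).
  { pose proof (atan_bound tau0).
    split; [left; apply tan_gt_0; lra | now apply tan_le_of_le_atan]. }
  apply in_ball_of_dil_closed; [exact Halpha|].
  intros k _ HB.
  apply (dil_hmul_hinv_in_Balpha alpha theta z); auto.
  now apply small_slope_le.
Qed.
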